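(* Let $\Gamma$ be a finitely generated group and $H\le\Gamma$ an amenable subgroup. If for some finite symmetric generating set $S$ the Schreier graph $\mathrm{Sch}(\Gamma,H,S)$ is multi-ended, then $\Gamma$ is extraterrestrial.
   Context: The Schreier graph $\mathrm{Sch}(\Gamma,H,S)$ has vertices the right cosets $Hg$ and edges $\{Hg,Hgs\}$, $s\in S$. A connected graph is multi-ended if there is a finite set of vertices whose removal leaves at least two infinite connected components. A finitely generated group is extraterrestrial if its Cayley graph with respect to some (equivalently any) finite symmetric generating set is extraterrestrial, where a graph $G=(V,E)$ is extraterrestrial if for every $m$ there is $k$ such that for every $r$ there is a triple $(U,F,O)$ of pairwise disjoint finite vertex sets with $U\neq\emptyset$, $|U|\ge m|F|$, a bijection $\mu:U\to O$ with $d_G(u,\mu(u))\le k$, and every path from $U$ to $O$ either contains a vertex of $F$ or has length at least $r$. *)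

From Stdlib Require Import Reals List.
From mathcomp Require Import all_boot.

Set Implicit Arguments.
Unset Strict Implicit.
Unset Printing Implicit Defensive.

Local Open Scope group_scope.

(* Graphs (possibly infinite), given by a vertex type and an adjacency *)
(* relation.  Finite vertex sets are represented by duplicate-free     *)
(* lists; their cardinality is the length of the list.                 *)

Record graph := Graph { vert : Type; adj : vert -> vert -> Prop }.

(* [walk Gr (v0 :: vs)] : consecutive vertices are adjacent.
   A walk [v0 :: vs] has length [length vs] (number of edges). *)
Fixpoint walk (Gr : graph) (v : vert Gr) (vs : list (vert Gr)) : Prop :=
  match vs with
  | nil => True
  | w :: ws => adj v w /\ walk w ws
  end.

Definition walk_last (Gr : graph) (v : vert Gr) (vs : list (vert Gr)) :=
  List.last vs v.

Definition dist_le (Gr : graph) (u v : vert Gr) (k : nat) : Prop :=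
  exists vs, walk u vs /\ walk_last u vs = v /\ (length vs <= k)%coq_nat.

Definition connected_avoiding (Gr : graph) (F : list (vert Gr)) (u v : vert Gr)
  : Prop :=
  exists vs, walk u vs /\ walk_last u vs = v /\
    (forall x, In x (u :: vs) -> ~ In x F).

Definition finite_set (T : Type) (P : T -> Prop) : Prop :=
  exists l : list T, forall x, P x -> In x l.

Definition infinite_component (Gr : graph) (F : list (vert Gr)) (u : vert Gr)
  : Prop :=
  ~ In u F /\ ~ finite_set (connected_avoiding F u).

Definition multi_ended (Gr : graph) : Prop :=
  exists (F : list (vert Gr)) (u v : vert Gr),
    infinite_component F u /\ infinite_component F v /\
    ~ connected_avoiding F u v.

Definition extraterrestrial_graph (Gr : graph) : Prop :=
  forall m : nat, exists k : nat, forall r : nat,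
  exists (U F O : list (vert Gr)) (mu : vert Gr -> vert Gr),
    NoDup U /\ NoDup F /\ NoDup O /\
    (forall x, In x U -> ~ In x F) /\
    (forall x, In x U -> ~ In x O) /\
    (forall x, In x F -> ~ In x O) /\
    U <> nil /\
    (m * length F <= length U)%coq_nat /\
    (forall u, In u U -> In (mu u) O) /\
    (forall u u', In u U -> In u' U -> mu u = mu u' -> u = u') /\
    (forall o, In o O -> exists u, In u U /\ mu u = o) /\
    (forall u, In u U -> dist_le u (mu u) k) /\
    (forall u vs, In u U -> walk u vs -> In (walk_last u vs) O ->
        (exists x, In x (u :: vs) /\ In x F) \/ (r <= length vs)%coq_nat).

Section GroupDefs.
Variable G : groupType.

Definition word_prod (w : list G) : G := List.fold_right (fun s x => s * x) 1 w.

Definition symmetric_set (S : list G) : Prop := forall s, In s S -> In (s^-1) S.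

Definition generating_set (S : list G) : Prop :=
  forall g : G, exists w : list G, (forall s, In s w -> In s S) /\ g = word_prod w.

Definition fin_sym_gen_set (S : list G) : Prop :=
  symmetric_set S /\ generating_set S.

Definition finitely_generated : Prop := exists S, fin_sym_gen_set S.

Definition is_subgroup (H : G -> Prop) : Prop :=
  H 1 /\ (forall x y, H x -> H y -> H (x * y)) /\ (forall x, H x -> H (x^-1)).

(* H is amenable (as a discrete group): there is a finitely additive,
   left-H-invariant probability measure defined on all subsets of H. *)
Definition amenable_subgroup (H : G -> Prop) : Prop :=
  exists mu : (G -> Prop) -> R,
    mu H = R1 /\
    (forall A, (forall x, A x -> H x) -> Rle R0 (mu A)) /\
    (forall A B, (forall x, A x -> H x) -> (forall x, B x -> H x) ->
       (forall x, A x -> B x -> False) ->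
       mu (fun x => A x \/ B x) = Rplus (mu A) (mu B)) /\
    (forall h A, H h -> (forall x, A x -> H x) ->
       mu (fun x => A (h^-1 * x)) = mu A).

Definition Cayley (S : list G) : graph :=
  @Graph G (fun g g' => exists s, In s S /\ g' = g * s).

Definition rcoset (H : G -> Prop) (g : G) : G -> Prop := fun x => H (x * g^-1).

Definition rcoset_type (H : G -> Prop) : Type :=
  { C : G -> Prop | exists g, C = rcoset H g }.

Definition Schreier (H : G -> Prop) (S : list G) : graph :=
  @Graph (rcoset_type H)
    (fun C D => exists g s, In s S /\ proj1_sig C = rcoset H g /\
                            proj1_sig D = rcoset H (g * s)).

Definition extraterrestrial_group : Prop :=
  exists S, fin_sym_gen_set S /\ extraterrestrial_graph (Cayley S).

End GroupDefs.

From Stdlib Require Import Reals List.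
From mathcomp Require Import all_boot.
From Stdlib Require Import Classical ClassicalEpsilon FunctionalExtensionality
  PropExtensionality ProofIrrelevance Lia Lra.
From mathcomp Require Import zify.

Set Implicit Arguments.
Unset Strict Implicit.
Unset Printing Implicit Defensive.

(* Choose a finite set [F0] of cosets separating two infinite regions [A] and [B]
   of the Schreier graph, and N > 2m|F0| pairs (x_i, y_i) with the cosets H x_i in
   [A], H y_i in [B], all distinct, and y_i = x_i w_i for words of length at most k.
   Given r, let K be the finite set of elements of H of the form x_i w z^-1, with
   |w| <= r and z a representative of a coset of [F0].  Amenability gives a finite
   Følner set Phi in H with |Phi K| < 2|Phi|: otherwise Hall's marriage theorem
   and a compactness argument produce a map sending each x in H to two points
   x k_x, x k'_x (k_x, k'_x in K) with all images distinct, and both images would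
   have full invariant mean.  Then U = Phi {x_i}, O = Phi {y_i}, h x_i |-> h y_i and
   F = Phi K {z} work: a path of length <= r from U to O projects to a path from
   [A] to [B], so it visits a coset of [F0] at a point h x_i w = h (x_i w z^-1) z
   of F, while |F| <= 2 |Phi| |F0| < |U| / m. *)

Section HallMarriage.
Variables (A B : finType) (b0 : B).

Definition nbhd (N : A -> {set B}) (Y : {set A}) : {set B} := \bigcup_(a in Y) N a.

Definition hall_condition (N : A -> {set B}) (X : {set A}) :=
  forall Y : {set A}, Y \subset X -> #|Y| <= #|nbhd N Y|.

Definition matching (N : A -> {set B}) (X : {set A}) (f : A -> B) :=
  {in X, forall a, f a \in N a} /\ {in X &, injective f}.

Lemma nbhdD N C Y : nbhd (fun a => N a :\: C) Y = nbhd N Y :\: C.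
Proof.
apply/setP => x; rewrite /nbhd inE; apply/bigcupP/andP.
  by move=> [a aY]; rewrite inE => /andP [xC xN]; split => //; apply/bigcupP; exists a.
by move=> [xC /bigcupP [a aY xN]]; exists a; rewrite ?inE ?xC.
Qed.

Lemma nbhdU N Y Z : nbhd N (Y :|: Z) = nbhd N Y :|: nbhd N Z.
Proof. exact: bigcup_setU. Qed.

Lemma nbhd1 N a : nbhd N [set a] = N a.
Proof. exact: big_set1. Qed.

Lemma hall_conditionS N (X Y : {set A}) : Y \subset X -> hall_condition N X -> hall_condition N Y.
Proof. by move=> sYX hX Z sZY; apply: hX; apply: subset_trans sZY sYX. Qed.

Lemma matching_glue N (X Y : {set A}) (C : {set B}) f g : Y \subset X ->
  matching N Y f -> {in Y, forall a, f a \in C} ->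
  matching (fun a => N a :\: C) (X :\: Y) g ->
  matching N X (fun a => if a \in Y then f a else g a).
Proof.
move=> sYX [fN fI] fC [gN gI].
have XY a : a \in X -> a \notin Y -> a \in X :\: Y by move=> aX aY; rewrite inE aY.
split=> [a aX|a b aX bX].
  case: ifP => aY; first exact: fN.
  by have := gN a (XY a aX (negbT aY)); rewrite inE => /andP [].
case: ifP => aY; case: ifP => bY.
- exact: fI.
- by move=> e; have := gN b (XY b bX (negbT bY)); rewrite inE -e fC.
- by move=> e; have := gN a (XY a aX (negbT aY)); rewrite inE e fC.
- by apply: gI; apply: XY => //; rewrite ?aY ?bY.
Qed.

Section Step.
Variables (N : A -> {set B}) (X : {set A}).
Hypothesis IH : forall (N' : A -> {set B}) (X' : {set A}),
  #|X'| < #|X| -> hall_condition N' X' -> exists f, matching N' X' f.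
Hypothesis hallX : hall_condition N X.

(* A critical nonempty proper subset [Y] (with [#|nbhd N Y| = #|Y|]) is matched
   onto its neighbourhood; the rest still satisfies Hall's condition outside it. *)
Lemma hall_step_critical (Y : {set A}) : Y \subset X -> Y != set0 -> Y != X ->
  #|nbhd N Y| <= #|Y| -> exists f, matching N X f.
Proof.
move=> sYX nY0 nYX critY.
have [f fM] : exists f, matching N Y f.
  apply: IH; last exact: hall_conditionS hallX.
  by apply: proper_card; rewrite properEneq nYX.
have [g gM] : exists g, matching (fun a => N a :\: nbhd N Y) (X :\: Y) g.
  apply: IH.
    rewrite cardsDS //; have : 0 < #|Y| by rewrite card_gt0.
    have : #|Y| <= #|X| by apply: subset_leq_card. lia.
  move=> Z sZ; rewrite nbhdD.
  have dZY : Z :&: Y = set0.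
    apply/setP => x; rewrite !inE; apply/negbTE/andP => -[xZ xY].
    by have := subsetP sZ x xZ; rewrite inE xY.
  have sZY : Z :|: Y \subset X by rewrite subUset sYX (subset_trans sZ) ?subsetDl.
  have := hallX sZY; rewrite nbhdU cardsU dZY cards0 subn0.
  have := cardsU (nbhd N Z) (nbhd N Y); have := cardsD (nbhd N Z) (nbhd N Y).
  lia.
exists (fun a => if a \in Y then f a else g a); apply: matching_glue gM => //.
by move=> a aY; apply/bigcupP; exists a => //; apply: (proj1 fM).
Qed.

(* Without critical subsets, match any [a0] to any neighbour [b] and remove [b]. *)
Lemma hall_step_surplus a0 : a0 \in X ->
  (forall Y : {set A}, Y \subset X -> Y != set0 -> Y != X -> #|Y| < #|nbhd N Y|) ->
  exists f, matching N X f.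
Proof.
move=> a0X surplus.
have [b bN] : exists b, b \in N a0.
  apply/set0Pn; rewrite -card_gt0 -nbhd1.
  by apply: leq_trans (hallX _) => //; rewrite ?cards1 ?sub1set.
have [g gM] : exists g, matching (fun a => N a :\: [set b]) (X :\ a0) g.
  apply: IH; first by rewrite (cardsD1 a0 X) a0X.
  move=> Z sZ; rewrite nbhdD.
  have [->|nZ0] := eqVneq Z set0; first by rewrite cards0.
  have sZX : Z \subset X by apply: subset_trans sZ (subsetDl _ _).
  have nZX : Z != X.
    by apply: contraTneq sZ => ->; apply/subsetPn; exists a0; rewrite ?inE ?eqxx.
  have := surplus Z sZX nZ0 nZX; have := cardsD (nbhd N Z) [set b].
  have : #|nbhd N Z :&: [set b]| <= 1.
    by rewrite -(cards1 b); apply: subset_leq_card; apply: subsetIr.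
  lia.
exists (fun a => if a \in [set a0] then b else g a); apply: matching_glue gM.
- by rewrite sub1set.
- by split=> [a|a c]; rewrite !inE => /eqP -> // /eqP ->.
- by move=> a _; rewrite inE.
Qed.

End Step.

Theorem hall_marriage N X : hall_condition N X -> exists f, matching N X f.
Proof.
have [n ltXn] := ubnP #|X|; elim: n => // n IHn in N X ltXn *.
move=> hallX.
have IH N' (X' : {set A}) : #|X'| < #|X| -> hall_condition N' X' -> exists f, matching N' X' f.
  by move=> ltX'; apply: IHn; apply: leq_trans ltX' _.
have [->|/set0Pn [a0 a0X]] := eqVneq X set0.
  by exists (fun _ => b0); split=> ?; rewrite inE.
have [[Y [sYX nY0 nYX critY]]|noCrit] := classic (exists Y : {set A},
    [/\ Y \subset X, Y != set0, Y != X & #|nbhd N Y| <= #|Y|]).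
  exact: (hall_step_critical IH hallX sYX nY0 nYX critY).
apply: (hall_step_surplus IH hallX a0X) => Y sYX nY0 nYX.
by rewrite ltnNge; apply/negP => critY; apply: noCrit; exists Y.
Qed.

End HallMarriage.

Lemma card_seq_sub_mem (T : choiceType) (s l : seq T) : uniq l -> {subset l <= s} ->
  #|[set a : seq_sub s | val a \in l]| = size l.
Proof.
move=> ul sl.
have e : [set a : seq_sub s | val a \in l] =i pmap insub l.
  by move=> a; rewrite inE mem_pmap_sub.
rewrite (eq_card e) (card_uniqP (pmap_sub_uniq (seq_sub s) ul)) size_pmap_sub.
by apply/eqP; rewrite -all_count; apply/allP => x /sl.
Qed.

Definition infinitely_often (P : nat -> Prop) := forall M, exists2 n, M <= n & P n.

Lemma infinitely_often_pigeonhole (T : eqType) (P : nat -> Prop) (g : nat -> T)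
    (V : seq T) : infinitely_often P -> (forall n, P n -> g n \in V) ->
  exists2 v, v \in V & infinitely_often (fun n => P n /\ g n = v).
Proof.
elim: V P => [|v V IH] P infP gV; first by have [n _ /gV] := infP 0.
have [infPv|finPv] := classic (infinitely_often (fun n => P n /\ g n = v)).
  by exists v; rewrite ?inE ?eqxx.
have [M0 M0P] : exists M0, forall n, M0 <= n -> ~ (P n /\ g n = v).
  apply: NNPP => noM0; apply: finPv => M.
  by apply: NNPP => noN; apply: noM0; exists M => n Mn Pn; apply: noN; exists n.
have [v' v'V infPv'] : exists2 v', v' \in V &
    infinitely_often (fun n => (P n /\ M0 <= n) /\ g n = v').
  apply: IH => [M|n [Pn M0n]].
    by have [n Mn Pn] := infP (maxn M M0); exists n; [lia | split => //; lia].
  by move: (gV n Pn); rewrite inE => /orP [/eqP gnv|//]; case: (M0P n M0n).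
exists v'; first by rewrite inE v'V orbT.
by move=> M; have [n Mn [[Pn _] gn]] := infPv' M; exists n.
Qed.

Section ClusterPoint.
Variables (T : eqType) (V : seq T) (f : nat -> nat -> T).
Hypothesis fV : forall n j, f n j \in V.

Definition extendable (ds : seq T) :=
  infinitely_often (fun n => mkseq (f n) (size ds) = ds).

Lemma extendable_nil : extendable [::].
Proof. by move=> M; exists M. Qed.

Lemma extendable_rcons ds : extendable ds -> exists v, extendable (rcons ds v).
Proof.
move=> extds; have [v _ infv] := infinitely_often_pigeonhole
  (g := fun n => f n (size ds)) extds (fun n _ => fV n (size ds)).
exists v => M; have [n Mn [fds fv]] := infv M.
by exists n; rewrite // size_rcons mkseqS fds fv.
Qed.

Definition branch_node := {ds : seq T | extendable ds}.

Definition next_value (d : branch_node) : T :=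
  proj1_sig (constructive_indefinite_description _ (extendable_rcons (proj2_sig d))).

Definition next_node (d : branch_node) : branch_node :=
  exist _ (rcons (proj1_sig d) (next_value d))
    (proj2_sig (constructive_indefinite_description _ (extendable_rcons (proj2_sig d)))).

(* König's lemma: the branch of the tree of extendable prefixes. *)
Definition branch (i : nat) : branch_node := iter i next_node (exist _ [::] extendable_nil).

Definition branch_limit (j : nat) : T := next_value (branch j).

Lemma branchE i : proj1_sig (branch i) = mkseq branch_limit i.
Proof. by elim: i => //= i IHi; rewrite mkseqS -IHi. Qed.

Lemma cluster_point :
  exists g : nat -> T, forall M, exists2 n, M <= n & forall j, j <= M -> f n j = g j.
Proof.
exists branch_limit => M; have := proj2_sig (branch M.+1) M.
rewrite branchE size_mkseq => -[n Mn fg]; exists n => [|j jM]; first lia.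
by have := congr1 (nth (f 0 0) ^~ j) fg; rewrite !nth_mkseq.
Qed.

End ClusterPoint.

Definition asbool (P : Prop) : bool :=
  if excluded_middle_informative P then true else false.

Lemma asboolP (P : Prop) : reflect P (asbool P).
Proof. by rewrite /asbool; case: excluded_middle_informative => /= h; constructor. Qed.

Lemma InP (T : eqType) (x : T) (s : seq T) : reflect (In x s) (x \in s).
Proof.
elim: s => [|y s IHs] /=; first by constructor.
rewrite inE; apply: (iffP orP) => [[/eqP ->|/IHs]|[->|/IHs]]; by [left | right].
Qed.

Lemma NoDupP (T : eqType) (s : seq T) : reflect (NoDup s) (uniq s).
Proof.
elim: s => [|y s IHs] /=; first by do 2 constructor.
apply: (iffP andP) => [[/InP ys /IHs us]|/NoDup_cons_iff [ys /IHs us]].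
  by constructor.
by split=> //; apply/InP.
Qed.

Lemma NoDup_map_inj (A B : Type) (f : A -> B) (l : seq A) a b :
  NoDup (map f l) -> In a l -> In b l -> f a = f b -> a = b.
Proof.
elim: l => //= x l IHl /NoDup_cons_iff [fxl ndl].
case=> [<-|al]; case=> [<-|bl] // fab; try by apply: IHl.
- by case: fxl; rewrite fab; apply: in_map.
- by case: fxl; rewrite -fab; apply: in_map.
Qed.

Lemma not_finite_fresh (T : Type) (P : T -> Prop) (l : seq T) :
  ~ finite_set P -> exists2 a, P a & ~ In a l.
Proof.
move=> infP; apply: NNPP => noa; apply: infP; exists l => x Px.
by apply: NNPP => xl; apply: noa; exists x.
Qed.

Section Walks.
Variable Gr : graph.
Implicit Types (x y : vert Gr) (vs F : seq (vert Gr)).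

Lemma walk_last_cons x y vs : walk_last x (y :: vs) = walk_last y vs.
Proof.
rewrite /walk_last; case: vs => // z vs.
by elim: vs z => // w vs IHvs z; apply: IHvs.
Qed.

Lemma walk_cat x vs1 vs2 :
  walk x (vs1 ++ vs2) <-> walk x vs1 /\ walk (walk_last x vs1) vs2.
Proof.
elim: vs1 x => [|y vs1 IHvs1] x; first by cbn; tauto.
by rewrite walk_last_cons; cbn [walk cat]; rewrite IHvs1; tauto.
Qed.

Lemma walk_last_cat x vs1 vs2 :
  walk_last x (vs1 ++ vs2) = walk_last (walk_last x vs1) vs2.
Proof. by elim: vs1 x => // y vs1 IHvs1 x; rewrite cat_cons !walk_last_cons. Qed.

Lemma walk_last_in x vs : In (walk_last x vs) (x :: vs).
Proof. by elim: vs x => [|y vs IHvs] x; [left | rewrite walk_last_cons; right]. Qed.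

Lemma connected_avoiding_trans F x y z :
  connected_avoiding F x y -> connected_avoiding F y z -> connected_avoiding F x z.
Proof.
move=> [vs1 [w1 [<- a1]]] [vs2 [w2 [<- a2]]]; exists (vs1 ++ vs2).
split; first exact/walk_cat.
split=> [|v]; first by rewrite walk_last_cat.
rewrite -cat_cons => /(in_app_iff (x :: vs1)) [v1|v2]; first exact: a1.
by apply: a2; right.
Qed.

Lemma connected_avoiding_end F x y : connected_avoiding F x y -> ~ In y F.
Proof. by move=> [vs [_ [<- a]]]; apply: a; apply: walk_last_in. Qed.

Hypothesis adj_sym : forall x y, adj x y -> adj y x.

Lemma walk_rev x vs : walk x vs -> exists vs', [/\ walk (walk_last x vs) vs',
  walk_last (walk_last x vs) vs' = x & forall z, In z (walk_last x vs :: vs') -> In z (x :: vs)].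
Proof.
elim: vs x => [|y vs IHvs] x; first by exists nil.
move=> [xy wy]; have [vs' [w' e' s']] := IHvs y wy.
rewrite walk_last_cons; exists (vs' ++ [:: x]); split.
- by apply/walk_cat; rewrite e'; split=> //; split=> //; apply: adj_sym.
- by rewrite walk_last_cat e'.
- move=> z [<-|]; first by right; apply: s'; left.
  by move=> /(in_app_iff vs') [zvs'|[<-|[]]]; [right; apply: s'; right | left].
Qed.

Lemma connected_avoiding_sym F x y :
  connected_avoiding F x y -> connected_avoiding F y x.
Proof.
move=> [vs [w [<- a]]]; have [vs' [w' e' s']] := walk_rev w.
by exists vs'; do 2!split=> //; move=> z /s'; apply: a.
Qed.

Definition meets F x vs := exists y, In y (x :: vs) /\ In y F.

Definition separates F (A B : vert Gr -> Prop) :=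
  forall a vs, A a -> walk a vs -> B (walk_last a vs) -> meets F a vs.

Lemma separates_disjoint F A B x : separates F A B -> (A x -> ~ In x F) ->
  A x -> B x -> False.
Proof. by move=> sep AF Ax Bx; have [y [[<-|[]] yF]] := sep x nil Ax I Bx; apply: AF. Qed.

Lemma multi_ended_separated : multi_ended Gr -> exists F (A B : vert Gr -> Prop),
  [/\ ~ finite_set A, ~ finite_set B, (forall x, A x -> ~ In x F),
      (forall x, B x -> ~ In x F) & separates F A B].
Proof.
move=> [F [u [v [[_ infA] [[_ infB] nuv]]]]].
exists F, (connected_avoiding F u), (connected_avoiding F v).
split=> // [x|x|a vs ua wa vb]; try exact: connected_avoiding_end.
apply: NNPP => avoid; apply: nuv; apply: connected_avoiding_trans ua _.
apply: connected_avoiding_trans (connected_avoiding_sym vb).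
by exists vs; do 2!split=> //; move=> y y_a yF; apply: avoid; exists y.
Qed.

End Walks.

Local Open Scope group_scope.

Section TwoToOne.
Variables (G : groupType) (H : G -> Prop).

Definition mul_seq (Phi K : seq G) := undup [seq x * k | x <- Phi, k <- K].

(* The failure of the Følner condition for [K] with ratio 2. *)
Definition doubles (K : seq G) := forall Phi : seq G,
  uniq Phi -> Phi != [::] -> (forall x, x \in Phi -> H x) ->
  2 * size Phi <= size (mul_seq Phi K).

Definition two_to_one (K : seq G) (P : G -> Prop) (kn : G -> bool -> G) :=
  (forall x b, kn x b \in K) /\
  (forall x y b b', P x -> P y -> x * kn x b = y * kn y b' -> x = y /\ b = b').

Section Finite.
Variables (K Ls : seq G).
Hypotheses (dK : doubles K) (LsH : forall x, x \in Ls -> H x).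

Let vertex := (seq_sub Ls * bool)%type.
Let target (p : vertex) : {set seq_sub (mul_seq Ls K)} :=
  [set z | val z \in [seq val p.1 * k | k <- K]].

Lemma nbhd_target Y : nbhd target Y =
  [set z | val z \in mul_seq (undup [seq val p.1 | p <- enum Y]) K].
Proof.
apply/setP => z; rewrite inE mem_undup; apply/bigcupP/allpairsP.
  move=> [p pY]; rewrite inE => /mapP [k kK ->]; exists (val p.1, k); split => //=.
  by rewrite mem_undup; apply/mapP; exists p; rewrite ?mem_enum.
move=> [[x k] /= [+ kK ez]]; rewrite mem_undup => /mapP [p pY ex]; subst x.
exists p; first by rewrite -mem_enum.
by rewrite /target inE; apply/mapP; exists k.
Qed.

Lemma hall_target : hall_condition target [set: vertex].
Proof.
move=> Y _; pose Psi := undup [seq val p.1 | p <- enum Y].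
have sPsi : {subset Psi <= Ls}.
  by move=> x; rewrite mem_undup => /mapP [p _ ->]; apply: valP.
have cardY : #|Y| <= 2 * size Psi.
  have sY : Y \subset setX [set a : seq_sub Ls | val a \in Psi] [set: bool].
    apply/subsetP => p pY; rewrite !inE andbT mem_undup.
    by apply/mapP; exists p; rewrite ?mem_enum.
  apply: leq_trans (subset_leq_card sY) _.
  by rewrite cardsX card_seq_sub_mem ?undup_uniq // cardsT card_bool mulnC.
have [Psi0|nPsi] := eqVneq Psi [::].
  by move: cardY; rewrite Psi0 muln0 leqn0 => /eqP ->.
apply: leq_trans cardY (leq_trans (dK (undup_uniq _) nPsi _) _).
  by move=> x /sPsi /LsH.
rewrite nbhd_target card_seq_sub_mem ?undup_uniq // => y.
rewrite !mem_undup => /allpairsP [[x k] [xP kK ->]].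
by apply/allpairsP; exists (x, k); split => //; apply: sPsi.
Qed.

Lemma two_to_one_finite k0 : k0 \in K ->
  exists kn, two_to_one K (fun x => x \in Ls) kn.
Proof.
move=> k0K; have [Ls0|nLs] := eqVneq Ls [::].
  by exists (fun _ _ => k0); split=> // x y b b'; rewrite Ls0.
have [x0 x0Ls] : exists x0, x0 \in Ls.
  by move: nLs; case: (Ls) => // x ? _; exists x; rewrite inE eqxx.
have x0K : x0 * k0 \in mul_seq Ls K.
  by rewrite mem_undup; apply/allpairsP; exists (x0, k0).
have [f [fN fI]] := hall_marriage (SeqSub x0K) hall_target.
exists (fun x b => if insub x is Some a then x^-1 * val (f (a, b)) else k0); split.
  move=> x b; case: insubP => [a _ ea|_] //.
  have := fN (a, b) (in_setT _); rewrite inE /= => /mapP [k kK ->].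
  by rewrite ea mulKg.
move=> x y b b' xLs yLs.
rewrite (insubT (fun x => x \in Ls) xLs) (insubT (fun x => x \in Ls) yLs) /= !mulVKg.
move=> /val_inj /(fI _ _ (in_setT _) (in_setT _)) e.
by split; [move/(congr1 (fun p : vertex => val p.1)): e | move/(congr1 snd): e].
Qed.

End Finite.
End TwoToOne.

Section Subgroup.
Variables (G : groupType) (H : G -> Prop).
Hypothesis Hs : is_subgroup H.

Lemma subgroup1 : H 1. Proof. exact: (proj1 Hs). Qed.
Lemma subgroupM x y : H x -> H y -> H (x * y). Proof. exact: (proj1 (proj2 Hs)). Qed.
Lemma subgroupV x : H x -> H x^-1. Proof. exact: (proj2 (proj2 Hs)). Qed.
Lemma subgroupVr x : H x^-1 -> H x. Proof. by move/subgroupV; rewrite invgK. Qed.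

End Subgroup.

Section InvariantMean.
Variables (G : groupType) (H : G -> Prop) (mu : (G -> Prop) -> R).
Hypotheses (Hs : is_subgroup H) (mu1 : mu H = R1)
  (mu_ge0 : forall A, (forall x, A x -> H x) -> Rle R0 (mu A))
  (muU : forall A B, (forall x, A x -> H x) -> (forall x, B x -> H x) ->
     (forall x, A x -> B x -> False) -> mu (fun x => A x \/ B x) = Rplus (mu A) (mu B))
  (muMl : forall h A, H h -> (forall x, A x -> H x) -> mu (fun x => A (h^-1 * x)) = mu A).

Lemma mu_ext A B : (forall x, A x <-> B x) -> mu A = mu B.
Proof.
move=> AB; congr mu; apply: functional_extensionality => x.
exact: propositional_extensionality.
Qed.

(* The reflected mean is right-invariant, matching the right multiplications
   [x |-> x * k] of a two-to-one assignment. *)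
Definition rmean (A : G -> Prop) := mu (fun x => A x^-1).

Lemma rmean_ext A B : (forall x, A x <-> B x) -> rmean A = rmean B.
Proof. by move=> AB; apply: mu_ext. Qed.

Lemma rmeanH : rmean H = R1.
Proof. by rewrite -mu1; apply: mu_ext => x; split; [apply: subgroupVr | apply: subgroupV]. Qed.

Lemma rmean_ge0 A : (forall x, A x -> H x) -> Rle R0 (rmean A).
Proof. by move=> AH; apply: mu_ge0 => x /AH /subgroupVr; apply. Qed.

Lemma rmeanU A B : (forall x, A x -> H x) -> (forall x, B x -> H x) ->
  (forall x, A x -> B x -> False) ->
  rmean (fun x => A x \/ B x) = Rplus (rmean A) (rmean B).
Proof.
move=> AH BH AB; apply: muU => [x /AH|x /BH|x]; try exact: subgroupVr Hs _.
exact: AB.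
Qed.

Lemma rmeanMr k A : H k -> (forall x, A x -> H x) ->
  rmean (fun x => A (x * k^-1)) = rmean A.
Proof.
move=> Hk AH; rewrite /rmean -(muMl (h := k^-1) (A := fun x => A x^-1)).
- by apply: mu_ext => x; rewrite invgK invgM.
- exact: subgroupV.
- by move=> x /AH /subgroupVr; apply.
Qed.

Lemma rmean_le A B : (forall x, A x -> B x) -> (forall x, B x -> H x) ->
  Rle (rmean A) (rmean B).
Proof.
move=> AB BH.
have := rmeanU (A := A) (B := fun x => B x /\ ~ A x) (fun x a => BH x (AB x a))
  (fun x b => BH x (proj1 b)) (fun x a b => proj2 b a).
have -> : rmean (fun x => A x \/ B x /\ ~ A x) = rmean B.
  by apply: rmean_ext => x; split=> [[/AB|[]]|Bx] //; tauto.
have := rmean_ge0 (A := fun x => B x /\ ~ A x) (fun x b => BH x (proj1 b)).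
lra.
Qed.

Definition disjoint_family (ks : seq G) (P : G -> G -> Prop) :=
  forall k k' x, k \in ks -> k' \in ks -> P k x -> P k' x -> k = k'.

Definition family_union (ks : seq G) (P : G -> G -> Prop) :=
  fun x => exists2 k, k \in ks & P k x.

Lemma rmean_union_cons k ks (P : G -> G -> Prop) : uniq (k :: ks) ->
  (forall k x, P k x -> H x) -> disjoint_family (k :: ks) P ->
  rmean (family_union (k :: ks) P) = Rplus (rmean (P k)) (rmean (family_union ks P)).
Proof.
move=> /andP [kks _] PH disjP; rewrite -rmeanU.
- apply: rmean_ext => x; split.
    by move=> [k']; rewrite inE => /orP [/eqP ->|k'ks]; [left | right; exists k'].
  by case=> [Pk|[k' k'ks Pk']]; [exists k; rewrite ?inE ?eqxx | exists k'; rewrite ?inE ?k'ks ?orbT].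
- exact: PH.
- by move=> x [k' _ /PH].
- move=> x Pk [k' k'ks Pk']; move: kks.
  by rewrite (disjP k k' x) ?inE ?eqxx ?k'ks ?orbT.
Qed.

Lemma disjoint_family_behead k ks P :
  disjoint_family (k :: ks) P -> disjoint_family ks P.
Proof. by move=> disjP a b x aks bks; apply: disjP; rewrite inE ?aks ?bks orbT. Qed.

Lemma rmean_union_eq (P Q : G -> G -> Prop) ks : uniq ks ->
  (forall k x, P k x -> H x) -> (forall k x, Q k x -> H x) ->
  disjoint_family ks P -> disjoint_family ks Q ->
  (forall k, k \in ks -> rmean (P k) = rmean (Q k)) ->
  rmean (family_union ks P) = rmean (family_union ks Q).
Proof.
move=> + PH QH; elim: ks => [_ _ _ _|k ks IH uks disjP disjQ PQ].
  by apply: rmean_ext => x; split=> -[].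
rewrite !rmean_union_cons // PQ ?inE ?eqxx // IH //.
- by case/andP: uks.
- exact: disjoint_family_behead disjP.
- exact: disjoint_family_behead disjQ.
- by move=> k' k'ks; apply: PQ; rewrite inE k'ks orbT.
Qed.

Section TwoToOneImage.
Variables (K : seq G) (kk : G -> bool -> G).
Hypotheses (KH : forall k, k \in K -> H k) (kk21 : two_to_one K H kk).

Definition translate_image b := fun y => exists2 x, H x & y = x * kk x b.

Lemma translate_image_sub b y : translate_image b y -> H y.
Proof. by move=> [x Hx ->]; apply: subgroupM => //; apply/KH/(proj1 kk21). Qed.

(* [translate_image b] is [H] cut by [k = kk x b] and reassembled by right
   translations. *)
Lemma rmean_translate_image b : rmean (translate_image b) = R1.
Proof.
have [kkK kkI] := kk21.
pose part k := fun x => H x /\ kk x b = k.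
have partH k x : part k (x * k^-1) -> H x.
  move=> [Hx ek]; rewrite -(mulgVK k x); apply: subgroupM => //.
  by rewrite -ek; apply/KH/kkK.
rewrite -rmeanH.
have -> : rmean (translate_image b) =
    rmean (family_union (undup K) (fun k x => part k (x * k^-1))).
  apply: rmean_ext => y; split=> [[x Hx ->]|[k _ [Hx ek]]].
    by exists (kk x b); rewrite ?mem_undup ?kkK // /part mulgK.
  by exists (y * k^-1); rewrite // ek mulgVK.
have -> : rmean H = rmean (family_union (undup K) part).
  apply: rmean_ext => x; split=> [Hx|[k _ []]] //.
  by exists (kk x b); rewrite ?mem_undup ?kkK.
apply: rmean_union_eq => //; first exact: undup_uniq.
- by move=> k x [].
- move=> k k' y _ _ [Hx ek] [Hx' ek'].
  have e : y * k^-1 * kk (y * k^-1) b = y * k'^-1 * kk (y * k'^-1) b.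
    by rewrite ek ek' !mulgVK.
  by have [ex _] := kkI _ _ _ _ Hx Hx' e; rewrite -ek -ek' ex.
- by move=> k k' x _ _ [_ <-] [_ <-].
- move=> k kK; apply: rmeanMr => [|x []//]; apply: KH; by rewrite -mem_undup.
Qed.

End TwoToOneImage.

Lemma no_two_to_one (K : seq G) kk : (forall k, k \in K -> H k) -> ~ two_to_one K H kk.
Proof.
move=> KH kk21.
have disj x : translate_image kk true x -> translate_image kk false x -> False.
  by move=> [y Hy ->] [y' Hy' /(proj2 kk21 _ _ _ _ Hy Hy') []].
have sub x : translate_image kk true x \/ translate_image kk false x -> H x.
  by case=> /(translate_image_sub KH kk21).
have := rmean_le sub (fun _ Hx => Hx).
rewrite rmeanU ?(rmean_translate_image KH kk21) ?rmeanH //; first lra.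
  by move=> x /(translate_image_sub KH kk21).
by move=> x /(translate_image_sub KH kk21).
Qed.
End InvariantMean.

Section FolnerSets.
Variables (G : groupType) (H : G -> Prop) (e : nat -> G).
Hypothesis e_surj : forall g, exists n, e n = g.

Definition initial_H n := undup [seq x <- map e (iota 0 n.+1) | asbool (H x)].

Lemma initial_H_sub n x : x \in initial_H n -> H x.
Proof. by rewrite mem_undup mem_filter => /andP [/asboolP]. Qed.

Lemma mem_initial_H n j : j <= n -> H (e j) -> e j \in initial_H n.
Proof.
move=> jn Hj; rewrite mem_undup mem_filter; apply/andP; split; first exact/asboolP.
by apply: map_f; rewrite mem_iota; lia.
Qed.

(* Compactness: two-to-one assignments on the finite sets [initial_H n]
   converge pointwise along a subsequence, since they take values in [K]. *)
Lemma two_to_one_global K k0 : k0 \in K -> doubles H K -> exists kk, two_to_one K H kk.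
Proof.
move=> k0K dK.
have kfP n : exists kn, two_to_one K (fun x => x \in initial_H n) kn.
  by apply: (two_to_one_finite dK _ k0K) => x; apply: initial_H_sub.
pose kf n := proj1_sig (constructive_indefinite_description _ (kfP n)).
have kf21 n : two_to_one K (fun x => x \in initial_H n) (kf n).
  exact: proj2_sig (constructive_indefinite_description _ (kfP n)).
pose idx x := proj1_sig (constructive_indefinite_description _ (e_surj x)).
have idxK x : e (idx x) = x.
  exact: proj2_sig (constructive_indefinite_description _ (e_surj x)).
have kfK n j :
    (kf n (e j) true, kf n (e j) false) \in [seq (a, b) | a <- K, b <- K].
  apply/allpairsP; exists (kf n (e j) true, kf n (e j) false).
  by split; rewrite //=; apply: (proj1 (kf21 n)).
have [g gP] := cluster_point kfK.
pose kk x (b : bool) := if b then (g (idx x)).1 else (g (idx x)).2.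
have kk_kf M : exists2 n, M <= n & forall x b, idx x <= M -> kf n x b = kk x b.
  by have [n Mn gn] := gP M; exists n => // x [] /gn; rewrite /kk idxK => <-.
have initial_idx n x : H x -> idx x <= n -> x \in initial_H n.
  by move=> Hx xn; rewrite -(idxK x); apply: mem_initial_H; rewrite ?idxK.
exists kk; split=> [x b|x y b b' Hx Hy].
  by have [n _ <-] := kk_kf (idx x); rewrite ?leqnn //; apply: (proj1 (kf21 n)).
have [n Mn kfkk] := kk_kf (maxn (idx x) (idx y)).
rewrite -!kfkk ?leq_maxl ?leq_maxr //.
by apply: (proj2 (kf21 n)); apply: initial_idx => //; lia.
Qed.

End FolnerSets.

Theorem amenable_folner (G : groupType) (H : G -> Prop) (e : nat -> G) :
  is_subgroup H -> amenable_subgroup H -> (forall g, exists n, e n = g) ->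
  forall K : seq G, (forall k, k \in K -> H k) ->
  exists Phi : seq G, [/\ uniq Phi, Phi != [::], (forall x, x \in Phi -> H x) &
    size (mul_seq Phi K) < 2 * size Phi].
Proof.
move=> Hs [mu [mu1 [mu_ge0 [muU muMl]]]] e_surj [|k0 K] KH.
  by exists [:: 1]; split=> // x; rewrite inE => /eqP ->; apply: subgroup1.
apply: NNPP => noFolner.
have dK : doubles H (k0 :: K).
  move=> Phi uPhi nPhi PhiH; rewrite leqNgt; apply/negP => small.
  by apply: noFolner; exists Phi.
have [kk kk21] := two_to_one_global e_surj (mem_head k0 K) dK.
exact: (no_two_to_one Hs mu1 mu_ge0 muU muMl KH kk21).
Qed.

Section CayleySchreier.
Variables (G : groupType) (H : G -> Prop) (S : seq G).
Hypothesis Hs : is_subgroup H.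

Local Notation Sch := (Schreier H S).
Local Notation Cay := (Cayley S).

Definition word_in (w : seq G) := forall s, In s w -> In s S.

Definition coset_vertex (x : G) : vert Sch := exist _ (rcoset H x) (ex_intro _ x erefl).

Lemma coset_vertex_eq x y : coset_vertex x = coset_vertex y <-> H (x * y^-1).
Proof.
split=> [/(congr1 (fun C : vert Sch => proj1_sig C x))|Hxy].
  by rewrite /= /rcoset mulgV => <-; apply: subgroup1.
apply: subset_eq_compat; apply: functional_extensionality => z.
apply: propositional_extensionality; rewrite /rcoset; split=> Hz.
  by rewrite -(mulgVK x z) -mulgA; apply: subgroupM.
have -> : z * x^-1 = z * y^-1 * (x * y^-1)^-1 by rewrite invgM invgK !mulgA mulgVK.
by apply: subgroupM => //; apply: subgroupV.
Qed.

Lemma coset_vertexMl h x : H h -> coset_vertex (h * x) = coset_vertex x.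
Proof. by move=> Hh; apply/coset_vertex_eq; rewrite mulgK. Qed.

Definition coset_rep (C : vert Sch) : G :=
  proj1_sig (constructive_indefinite_description _ (proj2_sig C)).

Lemma coset_repK C : coset_vertex (coset_rep C) = C.
Proof.
case: C => C CP; apply: subset_eq_compat; rewrite /coset_rep /=.
by rewrite -(proj2_sig (constructive_indefinite_description _ CP)).
Qed.

Lemma Schreier_adj_sym : symmetric_set S -> forall C D : vert Sch, adj C D -> adj D C.
Proof.
move=> symS C D [g [s [Ss [eC eD]]]]; exists (g * s), s^-1.
by rewrite eD eC mulgK; split=> //; apply: symS.
Qed.

Lemma walk_coset x vs : @walk Cay x vs -> walk (coset_vertex x) (map coset_vertex vs).
Proof.
by elim: vs x => [|y vs IHvs] x //= [[s [Ss ->]] w]; split; [exists x, s | apply: IHvs].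
Qed.

Lemma walk_last_coset x vs :
  walk_last (coset_vertex x) (map coset_vertex vs) = coset_vertex (@walk_last Cay x vs).
Proof.
elim: vs x => [|y vs IHvs] x //.
by rewrite (walk_last_cons (Gr := Sch)) (walk_last_cons (Gr := Cay)) IHvs.
Qed.

Lemma walk_word x w : word_in w -> exists vs,
  [/\ @walk Cay x vs, walk_last x vs = x * word_prod w & size vs = size w].
Proof.
elim: w x => [|s w IHw] x Sw; first by exists nil; rewrite /= mulg1.
have [vs [wvs evs svs]] := IHw (x * s) (fun t wt => Sw t (or_intror wt)).
exists (x * s :: vs); split; first by split=> //; exists s; split=> //; apply: Sw; left.
  by rewrite (walk_last_cons (Gr := Cay)) evs mulgA.
by rewrite /= svs.
Qed.

Lemma walk_prefix x vs y : @walk Cay x vs -> In y (x :: vs) ->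
  exists w, [/\ word_in w, size w <= size vs & y = x * word_prod w].
Proof.
have nil_word x' vs' : exists w, [/\ word_in w, size w <= size vs' & x' = x' * word_prod w].
  by exists nil; split=> [? []||] //=; rewrite mulg1.
elim: vs x => [|z vs IHvs] x; first by move=> _ [<-|[]].
move=> [[s [Ss ->]] wz] [<-|yvs] //.
have [w [Sw sw ->]] := IHvs _ wz yvs.
exists (s :: w); split=> //=; last by rewrite mulgA.
by move=> t [<-|wt] //; apply: Sw.
Qed.

Fixpoint words_upto n : seq (seq G) :=
  if n is n'.+1 then [::] :: [seq s :: w | s <- S, w <- words_upto n'] else [:: [::]].

Lemma mem_words_upto n w : word_in w -> size w <= n -> w \in words_upto n.
Proof.
elim: n w => [|n IHn] [|s w] Sw //= wn; rewrite ?inE ?eqxx //.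
apply/orP; right; apply/allpairsP; exists (s, w); split=> //=.
  by apply/InP; apply: Sw; left.
by apply: IHn => // t wt; apply: Sw; right.
Qed.

Definition word_enum (j : nat) : G :=
  if unpickle j is Some (n, i) then word_prod (nth [::] (words_upto n) i) else 1.

Lemma word_enum_surj : generating_set S -> forall g, exists j, word_enum j = g.
Proof.
move=> genS g; have [w [Sw ->]] := genS g.
exists (pickle (size w, index w (words_upto (size w)))).
by rewrite /word_enum pickleK nth_index // mem_words_upto.
Qed.

Lemma word_length_bound (ps : seq (G * G)) : generating_set S -> exists k,
  forall p, In p ps -> exists w, [/\ word_in w, size w <= k & p.2 = p.1 * word_prod w].
Proof.
move=> genS; elim: ps => [|p ps [k kP]]; first by exists 0.
have [w [Sw ew]] := genS (p.1^-1 * p.2).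
exists (maxn k (size w)) => q [<-|qps]; first by exists w; rewrite -ew mulVKg; split=> //; lia.
by have [w' [Sw' w'k ->]] := kP q qps; exists w'; split=> //; lia.
Qed.

End CayleySchreier.

Section Construction.
Variables (G : groupType) (H : G -> Prop) (S : seq G).
Hypothesis Hs : is_subgroup H.

Local Notation Sch := (Schreier H S).
Local Notation Cay := (Cayley S).
Local Notation cv := (@coset_vertex G H S).
Local Notation rep := (@coset_rep G H S).

Variables (F0 : seq (vert Sch)) (A B : vert Sch -> Prop).
Hypotheses (AF0 : forall x, A x -> ~ In x F0) (BF0 : forall x, B x -> ~ In x F0)
  (sepAB : separates F0 A B).

Lemma lifted_pairs N : ~ finite_set A -> ~ finite_set B ->
  exists ps : seq (G * G), [/\ size ps = N, NoDup (map (fun p => cv p.1) ps),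
    NoDup (map (fun p => cv p.2) ps) & forall p, In p ps -> A (cv p.1) /\ B (cv p.2)].
Proof.
move=> infA infB; elim: N => [|N [ps [sps nd1 nd2 psAB]]].
  by exists [::]; split=> //; constructor.
have [a Aa aps] := not_finite_fresh (map (fun p => cv p.1) ps) infA.
have [b Bb bps] := not_finite_fresh (map (fun p => cv p.2) ps) infB.
exists ((rep a, rep b) :: ps); rewrite /= !coset_repK.
split=> [|||p [<-|/psAB //]]; rewrite /= ?coset_repK ?sps //; by constructor.
Qed.

(* For [x] in the coset of [p.1], [x * pair_offset ps x] lies in that of [p.2]. *)
Fixpoint pair_offset (ps : seq (G * G)) (x : G) : G :=
  if ps is p :: ps' then
    if asbool (H (x * p.1^-1)) then p.1^-1 * p.2 else pair_offset ps' x
  else 1.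

Lemma pair_offsetE ps p x : NoDup (map (fun p => cv p.1) ps) -> In p ps ->
  H (x * p.1^-1) -> pair_offset ps x = p.1^-1 * p.2.
Proof.
elim: ps => // q ps IHps /= /NoDup_cons_iff [qps nd] pqps Hxp.
case: asboolP => [Hxq|nHxq]; last first.
  by case: pqps => [eqp|pps]; [rewrite eqp in nHxq | exact: IHps nd pps Hxp].
case: pqps => [-> //|pps]; case: qps.
rewrite -(proj2 (coset_vertex_eq S Hs x q.1) Hxq) (proj2 (coset_vertex_eq S Hs x p.1) Hxp).
exact: (in_map (fun p => cv p.1)).
Qed.

Section Witness.
Variables (ps : seq (G * G)) (r : nat) (Phi : seq G).
Hypotheses (nd1 : NoDup (map (fun p => cv p.1) ps)) (nd2 : NoDup (map (fun p => cv p.2) ps))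
  (psAB : forall p, In p ps -> A (cv p.1) /\ B (cv p.2)).

Definition F0_reps := map rep F0.

Definition translators : seq G :=
  [seq y <- [seq x * z^-1 | x <- [seq p.1 * word_prod w | p <- ps, w <- words_upto S r],
                            z <- F0_reps] | asbool (H y)].

Lemma translators_sub y : y \in translators -> H y.
Proof. by rewrite mem_filter => /andP [/asboolP]. Qed.

Hypothesis PhiH : forall h, h \in Phi -> H h.

Definition U_set := [seq h * p.1 | h <- Phi, p <- ps].
Definition shift (x : G) := x * pair_offset ps x.
Definition O_set := map shift U_set.
Definition F_set := undup [seq y * c | y <- mul_seq Phi translators, c <- F0_reps].

Lemma mem_U_set x : x \in U_set -> exists h p, [/\ h \in Phi, In p ps & x = h * p.1].
Proof. by move=> /allpairsP [[h p] /= [hPhi pps ->]]; exists h, p; split=> //; apply/InP. Qed.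

Lemma shiftE h p : h \in Phi -> In p ps -> shift (h * p.1) = h * p.2.
Proof.
move=> hPhi pps; rewrite /shift (pair_offsetE nd1 pps) ?mulgA ?mulgK //.
exact: PhiH.
Qed.

Lemma U_set_A x : x \in U_set -> A (cv x).
Proof.
move=> /mem_U_set [h [p [hPhi pps ->]]].
by rewrite (coset_vertexMl S Hs _ (PhiH hPhi)); case: (psAB pps).
Qed.

Lemma O_set_B x : x \in O_set -> B (cv x).
Proof.
move=> /mapP [y + ->] => /mem_U_set [h [p [hPhi pps ->]]].
by rewrite shiftE // (coset_vertexMl S Hs _ (PhiH hPhi)); case: (psAB pps).
Qed.

Lemma F_set_F0 x : x \in F_set -> In (cv x) F0.
Proof.
rewrite mem_undup => /allpairsP [[y c] /= [+ /InP cF0 ->]].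
rewrite mem_undup => /allpairsP [[h t] /= [hPhi tK ->]].
move: cF0; rewrite /F0_reps in_map_iff => -[C [<- CF0]].
rewrite (coset_vertexMl S Hs) ?coset_repK //.
by apply: subgroupM => //; [apply: PhiH | apply: translators_sub].
Qed.

Lemma translate_inj (f : G * G -> G) h h' p p' :
  NoDup (map (fun p => cv (f p)) ps) -> h \in Phi -> h' \in Phi -> In p ps -> In p' ps ->
  h * f p = h' * f p' -> h = h' /\ p = p'.
Proof.
move=> ndf hPhi h'Phi pps p'ps e.
have epp : p = p'.
  apply: NoDup_map_inj ndf pps p'ps _.
  by rewrite -(coset_vertexMl S Hs _ (PhiH hPhi)) e (coset_vertexMl S Hs _ (PhiH h'Phi)).
by split=> //; move: e; rewrite epp => /mulIg.
Qed.

Lemma U_set_uniq : uniq Phi -> uniq U_set.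
Proof.
move=> Phi_uniq; have ups : uniq ps by apply/NoDupP; apply: NoDup_map_inv nd1.
rewrite allpairs_uniq //.
move=> [h p] [h' p'] /allpairsP [[a b] /= [aPhi bps [-> ->]]].
move=> /allpairsP [[a' b'] /= [a'Phi b'ps [-> ->]]] /= e.
by have [-> ->] := translate_inj nd1 aPhi a'Phi (elimT (InP _ _) bps) (elimT (InP _ _) b'ps) e.
Qed.

Lemma shift_inj : {in U_set &, injective shift}.
Proof.
move=> x y /mem_U_set [h [p [hPhi pps ->]]] /mem_U_set [h' [p' [h'Phi p'ps ->]]].
by rewrite !shiftE // => /(translate_inj nd2 hPhi h'Phi pps p'ps) [-> ->].
Qed.

Lemma size_U_set : size U_set = (size Phi * size ps)%N.
Proof. exact: size_allpairs. Qed.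

Lemma size_F_set : size (mul_seq Phi translators) < 2 * size Phi ->
  size F_set <= 2 * size Phi * size F0.
Proof.
move=> Phi_folner.
apply: leq_trans (size_undup _) _; rewrite size_allpairs size_map.
by rewrite leq_mul2r (ltnW Phi_folner) orbT.
Qed.

Lemma dist_shift k x :
  (forall p, In p ps -> exists w, [/\ word_in S w, size w <= k & p.2 = p.1 * word_prod w]) ->
  x \in U_set -> dist_le (Gr := Cay) x (shift x) k.
Proof.
move=> kP /mem_U_set [h [p [hPhi pps ->]]].
have [w [Sw wk ep]] := kP p pps; have [vs [wvs lvs svs]] := walk_word (h * p.1) Sw.
exists vs; split=> //; split; first by rewrite lvs shiftE // ep mulgA.
by change (size vs <= k)%coq_nat; lia.
Qed.

(* A walk from [U_set] to [O_set] projects to a walk from [A] to [B] in the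
   Schreier graph, hence meets [F0] at some coset [cv y]; writing [y = h * t * z]
   with [z] the chosen representative of [cv y] puts [t] among the translators. *)
Lemma short_walk_meets_F_set u vs : u \in U_set -> @walk Cay u vs ->
  @walk_last Cay u vs \in O_set -> size vs <= r -> meets (Gr := Cay) F_set u vs.
Proof.
move=> uU wvs lastO svs.
have [y [yvs yF0]] : exists y, In y (u :: vs) /\ In (cv y) F0.
  have := sepAB (U_set_A uU) (walk_coset H wvs); rewrite walk_last_coset.
  move=> /(_ (O_set_B lastO)) [c [/(in_map_iff cv (u :: vs)) [y [<- yvs]] cF0]].
  by exists y.
have [h [p [hPhi pps eu]]] := mem_U_set uU.
have [w [Sw sw ey]] := walk_prefix wvs yvs.
set z := rep (cv y).
have Hyz : H (y * z^-1) by apply/(coset_vertex_eq S Hs); rewrite /z coset_repK.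
pose t := p.1 * word_prod w * z^-1.
have eyt : y = h * t * z by rewrite /t ey eu !mulgA mulgVK.
have Ht : H t.
  have -> : t = h^-1 * (y * z^-1) by rewrite eyt mulgK mulKg.
  by apply: (subgroupM Hs) => //; apply: (subgroupV Hs); apply: PhiH.
have zF0 : z \in F0_reps by apply/InP; apply: in_map.
have tK : t \in translators.
  rewrite mem_filter; apply/andP; split; first exact/asboolP.
  apply/allpairsP; exists (p.1 * word_prod w, z); split=> //.
  apply/allpairsP; exists (p, w); split=> //; first exact/InP.
  by apply: mem_words_upto => //=; lia.
exists y; split=> //; apply/InP; rewrite eyt mem_undup; apply/allpairsP.
exists (h * t, z); split=> //.
by rewrite mem_undup; apply/allpairsP; exists (h, t).
Qed.

End Witness.

Lemma Cayley_extraterrestrial : amenable_subgroup H -> generating_set S ->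
  ~ finite_set A -> ~ finite_set B -> extraterrestrial_graph Cay.
Proof.
move=> amen genS infA infB m.
have [ps [sps nd1 nd2 psAB]] := lifted_pairs (2 * m * size F0).+1 infA infB.
have [k kP] := word_length_bound ps genS.
exists k => r.
have [Phi [Phi_uniq Phi_nil PhiH Phi_folner]] :=
  amenable_folner Hs amen (word_enum_surj genS) (@translators_sub ps r).
have UA := U_set_A psAB PhiH; have OB := O_set_B nd1 psAB PhiH.
have FF0 x : x \in F_set ps r Phi -> In (cv x) F0 by apply: F_set_F0.
have length_size (T : Type) (s : seq T) : length s = size s by [].
exists (U_set ps Phi), (F_set ps r Phi), (O_set ps Phi), (shift ps).
have Uuniq := U_set_uniq nd1 PhiH Phi_uniq.
split; first exact/NoDupP.
split; first exact/NoDupP/undup_uniq.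
split.
  by apply/NoDupP; rewrite map_inj_in_uniq //; apply: (shift_inj nd1 nd2 PhiH).
split; first by move=> x /InP /UA xA /InP /FF0; apply: AF0.
split; first by move=> x /InP /UA xA /InP /OB; apply: separates_disjoint sepAB (@AF0 _) xA.
split; first by move=> x /InP /FF0 xF /InP /OB /BF0.
split.
  move=> U0; have := size_U_set ps Phi; rewrite U0 sps /=.
  by move: Phi_nil; rewrite -size_eq0; lia.
split.
  rewrite !length_size size_U_set sps.
  apply/leP; apply: leq_trans (leq_mul (leqnn m) (size_F_set Phi_folner)) _; nia.
split; first by move=> x /InP xU; apply/InP; apply: map_f.
split; first by move=> x y /InP xU /InP yU; apply: (shift_inj nd1 nd2 PhiH).
split; first by move=> o /InP /mapP [x xU ->]; exists x; split=> //; apply/InP.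
split; first by move=> x /InP; apply: (dist_shift nd1 PhiH).
move=> u vs /InP uU wvs /InP lastO; rewrite length_size.
have [rvs|vsr] := leqP r (size vs); first by right; apply/leP.
by left; apply: (short_walk_meets_F_set nd1 psAB PhiH uU wvs lastO (ltnW vsr)).
Qed.

End Construction.

Theorem mainTheorem9 (G : groupType) (H : G -> Prop) (S : list G) :
  finitely_generated G ->
  is_subgroup H ->
  amenable_subgroup H ->
  fin_sym_gen_set S ->
  multi_ended (Schreier H S) ->
  extraterrestrial_group G.
Proof.
move=> _ Hs amen [symS genS] /(multi_ended_separated (Schreier_adj_sym symS)).
move=> [F0 [A [B [infA infB AF0 BF0 sepAB]]]].
exists S; split; first by split.
exact (Cayley_extraterrestrial Hs AF0 BF0 sepAB amen genS infA infB).
Qed.
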